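(* The mechanism RandPoly is a universally truthful mechanism without money and with verification for CAs with unknown $k$-minded bidders (single supply), and it achieves an expected approximation ratio of $O(\sqrt m)$ (specifically at most $2(\sqrt m+1)$).
   Context: Combinatorial auction with a set $\mathsf U$ of $m$ goods (single copy each) and $n$ bidders. True type of bidder $i$: $t_i=(v_i,\mathcal S_i)$ with $\mathcal S_i$ a private collection of $k$ nonempty subsets of $\mathsf U$ and $v_i:\mathcal S_i\to\mathbb R_{\ge0}$ private, extended by $v_i(T)=\max\{v_i(S'):S'\in\mathcal S_i,S'\subseteq T\}$ ($0$ if none). Greedy algorithm: list elementary bids $(i,S,w_i(S))$ with $w_i(S)>0$ in non-increasing order of value (ties in favour of smaller bidder index); accept a bid (allocate $S$ to $i$) iff $i$ has no set yet and $S$ is disjoint from all accepted sets. RandPoly: let $v_{\max}$ be the largest declared value of any demanded set and $S_{\max}$ a set of that value (ties broken in a bid-independent way); with probability $1/2$ allocate only $S_{\max}$ to its bidder; with probability $1/2$ output the greedy allocation computed on the subinstance consisting only of the bids $(i,S,w_i(S))$ with $|S|\le\sqrt m$. Verification: bidder $i$ with true type $t_i$ facing $\mathbf b_{-i}$ may declare $b_i=(z,\mathcal T)$ only if $z(A_i(b_i,\mathbf b_{-i}))\le v_i(A_i(b_i,\mathbf b_{-i}))$. A deterministic mechanism is truthful without money and with verification if for all $i$, $\mathbf b_{-i}$, true $t_i$ and permitted $b_i$, $v_i(A_i(t_i,\mathbf b_{-i}))\ge v_i(A_i(b_i,\mathbf b_{-i}))$; universally truthful means a probability distribution over such deterministic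 mechanisms. Approximation ratio $\alpha$: on truthful input, expected social welfare $\ge\mathrm{OPT}/\alpha$. *)

From Stdlib Require List.
From HB Require Import structures.
From mathcomp Require Import all_boot all_order all_algebra.
Set Implicit Arguments. Unset Strict Implicit. Unset Printing Implicit Defensive.
Import Order.TTheory GRing.Theory Num.Theory.
Local Open Scope ring_scope.

Section Auction.
Variables (R : rcfType) (U : finType) (n : nat).

(* A (true or declared) type of a bidder: a collection of demanded sets
   together with a value for each of them (values outside the collection
   are irrelevant). *)
Record btype := BType { bval : {set U} -> R ; bcoll : {set {set U}} }.

Definition valid_type (k : nat) (t : btype) : Prop :=
  #|bcoll t| = k /\
  (forall S, S \in bcoll t -> S != set0) /\
  (forall S, S \in bcoll t -> 0 <= bval t S).

Definition ext_val (t : btype) (T : {set U}) : R :=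
  \big[Num.max/0]_(S in bcoll t | S \subset T) bval t S.

Definition profile := 'I_n -> btype.

Definition upd (b : profile) (i : 'I_n) (bi : btype) : profile :=
  fun j => if j == i then bi else b j.

Definition allocation := 'I_n -> {set U}.
Definition mechanism := profile -> allocation.

Definition feasible (a : allocation) : bool :=
  [forall i, forall j, (i != j) ==> [disjoint a i & a j]].

Definition welfare (t : profile) (a : allocation) : R :=
  \sum_(i < n) ext_val (t i) (a i).

Definition OPT (t : profile) : R :=
  \big[Num.max/0]_(a : {ffun 'I_n -> {set U}} | feasible a) welfare t a.

(* an elementary bid (i, S); its value is bval (b i) S *)
Definition ebid := ('I_n * {set U})%type.

Definition ebids (b : profile) : seq ebid :=
  [seq (i, X) | i <- enum 'I_n, X <- enum (bcoll (b i))].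

(* fixed, bid-independent order on sets used to break remaining ties *)
Definition set_rank (S : {set U}) : nat := enum_rank S.

Definition ebid_le (b : profile) (e1 e2 : ebid) : bool :=
  let w1 := bval (b e1.1) e1.2 in let w2 := bval (b e2.1) e2.2 in
  (w2 < w1) ||
  ((w1 == w2) &&
   ((nat_of_ord e1.1 < nat_of_ord e2.1)%N ||
    ((e1.1 == e2.1) && (set_rank e1.2 <= set_rank e2.2)%N))).

Definition sorted_ebids (b : profile) : seq ebid := sort (ebid_le b) (ebids b).

Definition greedy_step (acc : seq ebid) (e : ebid) : seq ebid :=
  if all (fun p : ebid => (p.1 != e.1) && [disjoint p.2 & e.2]) acc
  then rcons acc e else acc.

Definition alloc_of (acc : seq ebid) : allocation :=
  fun i => \bigcup_(p <- acc | p.1 == i) p.2.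

Definition greedy_on (keep : ebid -> bool) (b : profile) : allocation :=
  alloc_of (foldl greedy_step [::]
    [seq e <- sorted_ebids b | (0 < bval (b e.1) e.2) && keep e]).

(* subinstance of bids with |S| <= sqrt m, i.e. |S|^2 <= m (|S| a natural) *)
Definition small (e : ebid) : bool := (#|e.2| * #|e.2| <= #|U|)%N.

Definition M_greedy_small : mechanism := greedy_on small.

(* allocate only S_max (a demanded set of maximum declared value, ties broken
   by the fixed bid-independent order) to its bidder *)
Definition M_max : mechanism := fun b =>
  match sorted_ebids b with
  | [::] => fun _ => set0
  | e :: _ => fun i => if i == e.1 then e.2 else set0
  end.

Definition truthful_verif (k : nat) (M : mechanism) : Prop :=
  forall (i : 'I_n) (b : profile) (ti bi : btype),
    (forall j, valid_type k (b j)) -> valid_type k ti -> valid_type k bi ->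
    (* verification: bi is a permitted declaration *)
    ext_val bi (M (upd b i bi) i) <= ext_val ti (M (upd b i bi) i) ->
    ext_val ti (M (upd b i bi) i) <= ext_val ti (M (upd b i ti) i).

(* randomized mechanism = finite probability distribution over
   deterministic mechanisms *)
Definition rmechanism := seq (R * mechanism).

Definition is_distribution (D : rmechanism) : Prop :=
  (forall p, p \in map fst D -> 0 <= p) /\ \sum_(p <- map fst D) p = 1.

Definition universally_truthful (k : nat) (D : rmechanism) : Prop :=
  is_distribution D /\ forall pM, List.In pM D -> truthful_verif k pM.2.

Definition expected_welfare (D : rmechanism) (t : profile) : R :=
  \sum_(pM <- D) pM.1 * welfare t (pM.2 t).

Definition RandPoly : rmechanism :=
  [:: (2^-1, M_max); (2^-1, M_greedy_small)].

End Auction.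

(* RandPoly is a lottery over two deterministic mechanisms,
   M_max and the greedy algorithm on small bids, so it suffices that each of
   them is truthful.  Both satisfy the same monotonicity property, which
   implies truthfulness with verification (truthful_of_dominance): if a
   permitted lie of bidder i wins a set S, verification yields a true demanded
   set S' included in S whose true value is at least the declared value of S
   (verified_witness); bidding truthfully, the elementary bid (i, S') is at
   least as early in the bid order as the lie (i, S) was (truth_precedes),
   while the other bids are unchanged.  For M_max, (i, S') or an even better
   bid of i comes first (max_wins_at_least).  For the greedy algorithm, the
   accepted bids of the others preceding (i, S') are also accepted before
   (i, S) under the lie (others_accepted_before), hence are disjoint from S;
   so (i, S') or an earlier bid of i is accepted (greedy_wins_at_least).

   Let v_max be the largest bid value and G the total value of
   the bids accepted by the greedy algorithm.  In a feasible allocation, the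
   value of bidder i is realised by a demanded set S_i, and these sets are
   pairwise disjoint.  A large S_i (|S_i|^2 > m) is worth at most v_max, and
   there are at most sqrt m + 1 large ones (large_count).  A small S_i is
   blocked by an earlier accepted bid (greedy_charging), and an accepted
   small bid meets at most sqrt m + 1 of the S_i (conflict_count).  Hence
   OPT <= (sqrt m + 1) (v_max + G) (opt_bound), while RandPoly earns
   (v_max + G) / 2 in expectation. *)

From mathcomp Require Import all_boot all_order all_algebra.
From mathcomp Require Import ring lra.
Set Implicit Arguments. Unset Strict Implicit. Unset Printing Implicit Defensive.
Import Order.TTheory GRing.Theory Num.Theory.

Section SortedSeq.
Variables (T : eqType) (r : rel T).
Hypotheses (r_trans : transitive r) (r_refl : reflexive r) (r_anti : antisymmetric r).

Lemma filter_pred0_in (a : pred T) s : all (predC a) s -> filter a s = [::].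
Proof.
by move=> h; rewrite (eq_in_filter (a2 := pred0)) ?filter_pred0 // => x /(allP h) /negPf.
Qed.

Lemma filter_comm (a1 a2 : pred T) s : filter a1 (filter a2 s) = filter a2 (filter a1 s).
Proof. by rewrite -!filter_predI; apply: eq_filter => x /=; rewrite andbC. Qed.

Lemma sorted_split e s : sorted r s ->
  s = [seq x <- s | ~~ r e x] ++ [seq x <- s | r e x].
Proof.
elim: s => //= x s IH hs.
case: (boolP (r e x)) => hex /=; last by rewrite -IH // (path_sorted hs).
have hall : all (r e) s.
  by apply/allP=> y hy; apply: (r_trans hex); move/allP: (order_path_min r_trans hs); apply.
rewrite filter_pred0_in; last by apply/allP => y /(allP hall) /= ->.
by rewrite (all_filterP hall).
Qed.

Lemma sorted_head_min h s : sorted r (h :: s) -> forall x, x \in h :: s -> r h x.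
Proof.
move=> hs x; rewrite inE => /orP[/eqP ->|hx]; first exact: r_refl.
by move/allP: (order_path_min r_trans hs); apply.
Qed.

Lemma sorted_before s1 s2 e x : sorted r (s1 ++ e :: s2) -> x \in s1 -> r x e.
Proof.
move=> hs hx; move: hs; case/splitPr: hx => a b; rewrite -catA cat_cons.
move/cat_sorted2=> [_ /= hp].
by move/allP: (order_path_min r_trans hp); apply; rewrite mem_cat mem_head orbT.
Qed.

Lemma sorted_prefix s1 s2 e : sorted r (s1 ++ e :: s2) -> uniq (s1 ++ e :: s2) ->
  s1 = [seq x <- s1 ++ e :: s2 | ~~ r e x].
Proof.
move=> hs hu; rewrite filter_cat /= r_refl /=.
have hp : path r e s2 by move: hs; rewrite sorted_cat_cons => /andP[].
rewrite (@filter_pred0_in _ s2); last first.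
  by apply/allP => y /(allP (order_path_min r_trans hp)) /= ->.
rewrite cats0; apply/esym/all_filterP/allP => x hx /=.
apply/negP => hex.
have exe : x = e by apply: r_anti; rewrite (sorted_before hs hx) hex.
move: hu; rewrite cat_uniq /= => /and3P[_ /norP[/negP hh _] _].
by apply: hh; rewrite -exe.
Qed.

Lemma filter_sorted_prefix e (P : pred T) s : sorted r s ->
  {in s, forall x, ~~ r e x -> P x} ->
  exists rest, filter P s = [seq x <- s | ~~ r e x] ++ rest.
Proof.
move=> hs h; exists [seq x <- filter P s | r e x].
rewrite {1}(sorted_split e (sorted_filter r_trans P hs)) filter_comm.
congr (_ ++ _); apply/all_filterP/allP => x; rewrite mem_filter => /andP[h1 h2].
exact: h.
Qed.

End SortedSeq.

Section BidOrder.
Local Open Scope ring_scope.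
Variables (R : rcfType) (U : finType) (n : nat).
Implicit Types (b c : profile R U n) (e : ebid U n).

Definition bidval b e : R := bval (b e.1) e.2.

Lemma set_rank_inj : injective (@set_rank U).
Proof. by move=> x y h; apply: enum_rank_inj; apply: ord_inj. Qed.

Lemma ebid_le_refl b : reflexive (ebid_le b).
Proof. by move=> e; rewrite /ebid_le !eqxx leqnn /= ltnn !orbT. Qed.

Lemma ebid_le_total b : total (ebid_le b).
Proof.
move=> [i X] [j Y]; rewrite /ebid_le /=.
case: (ltgtP (bval (b i) X) (bval (b j) Y)) => [h|h|h]; rewrite ?h ?orbT //=.
case: (ltngtP i j) => hij; rewrite ?hij ?orbT //.
have -> : i = j by apply: ord_inj.
by rewrite eqxx /= ?ltnn /= leq_total.
Qed.

Lemma ebid_le_trans b : transitive (ebid_le b).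
Proof.
move=> [j Y] [i X] [k Z]; rewrite /ebid_le /=.
move=> /orP[h12|/andP[/eqP h12 h12']] /orP[h23|/andP[/eqP h23 h23']].
- by rewrite (lt_trans h23 h12).
- by rewrite -h23 h12.
- by rewrite h12 h23.
rewrite h12 h23 eqxx ltxx /=; apply/orP.
move: h12' h23' => /orP[a|/andP[/eqP a a']] /orP[c|/andP[/eqP c c']].
- by left; apply: ltn_trans a c.
- by left; rewrite -c.
- by left; rewrite a.
by right; rewrite a c eqxx /=; apply: leq_trans a' c'.
Qed.

Lemma ebid_le_anti b : antisymmetric (ebid_le b).
Proof.
move=> [i X] [j Y]; rewrite /ebid_le /=.
case: (ltgtP (bval (b i) X) (bval (b j) Y)) => //= _.
case: (ltngtP i j) => //= hij.
- by move=> /andP[/eqP ji]; rewrite ji ltnn in hij.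
- by move=> /andP[/andP[/eqP ji]]; rewrite ji ltnn in hij.
have eij : i = j by apply: ord_inj.
by rewrite eij eqxx /= => /anti_leq /set_rank_inj ->.
Qed.

Lemma ebid_le_val b e1 e2 : ebid_le b e1 e2 -> bidval b e2 <= bidval b e1.
Proof. by rewrite /ebid_le /bidval => /orP[/ltW //|/andP[/eqP -> _]]. Qed.

Lemma sorted_ebids_sorted b : sorted (ebid_le b) (sorted_ebids b).
Proof. exact/sort_sorted/ebid_le_total. Qed.

Lemma mem_ebids b (j : 'I_n) X : ((j, X) \in ebids b) = (X \in bcoll (b j)).
Proof.
apply/allpairsPdep/idP => [[j' [X' [_ hX [-> ->]]]]|hX].
  by rewrite mem_enum in hX.
by exists j, X; rewrite mem_enum mem_enum.
Qed.

Lemma uniq_ebids b : uniq (ebids b).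
Proof.
apply: allpairs_uniq_dep; first exact: enum_uniq.
  by move=> j _; apply: enum_uniq.
by move=> [x1 x2] [y1 y2] _ _ /= [e1]; move: x2 y2; rewrite e1 => ?? ->.
Qed.

Lemma ebids_others b c (i : 'I_n) : (forall j, j != i -> c j = b j) ->
  [seq e <- ebids c | e.1 != i] = [seq e <- ebids b | e.1 != i].
Proof.
move=> hcb; rewrite /ebids; elim: (enum 'I_n) => //= j js IH.
rewrite !filter_cat IH; congr (_ ++ _).
case: (boolP (j == i)) => hj; last by rewrite hcb.
by rewrite !filter_pred0_in //; apply/allP => x /mapP [X _ ->] /=; rewrite hj.
Qed.

End BidOrder.

Section Valuations.
Local Open Scope ring_scope.
Variables (R : rcfType) (U : finType) (n : nat).
Implicit Types (t : btype R U) (b : profile R U n) (T S : {set U}).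

Lemma ext_val_ge0 t T : 0 <= ext_val t T.
Proof. exact: bigmax_ge_id. Qed.

Lemma ext_val_ge t T S : S \in bcoll t -> S \subset T -> bval t S <= ext_val t T.
Proof. by move=> hS hST; apply: le_bigmax_cond; rewrite hS. Qed.

Lemma ext_val_mono t T T' : T \subset T' -> ext_val t T <= ext_val t T'.
Proof.
move=> hT; apply: bigmax_le => [|S /andP[hS hST]]; first exact: ext_val_ge0.
exact/ext_val_ge/(subset_trans hST).
Qed.

Lemma ext_val_attained t T : ext_val t T = 0 \/
  exists2 S, (S \in bcoll t) && (S \subset T) & ext_val t T = bval t S.
Proof.
rewrite /ext_val; elim/big_rec: _ => [|S x hS hx]; first by left.
have [_|_] := leP (bval t S) x; last by right; exists S.
by case: hx => [->|[S' hS' ->]]; [left | right; exists S'].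
Qed.

Lemma verified_witness t tb S : S \in bcoll tb -> ext_val tb S <= ext_val t S ->
  ext_val t S = 0 \/
  exists2 S', (S' \in bcoll t) && (S' \subset S) &
    ext_val t S = bval t S' /\ bval tb S <= bval t S'.
Proof.
move=> hS hv; have hz := le_trans (ext_val_ge hS (subxx S)) hv.
case: (ext_val_attained t S) => [|[S' hS' e]]; [by left | right; exists S' => //].
by rewrite -e.
Qed.

Lemma upd_same b i x : upd b i x i = x.
Proof. by rewrite /upd eqxx. Qed.

Lemma upd_other b i x j : j != i -> upd b i x j = b j.
Proof. by rewrite /upd => /negPf ->. Qed.

End Valuations.

Section GreedyRun.
Variables (U : finType) (n : nat).
Local Notation eb := (ebid U n).
Local Notation gstep := (@greedy_step U n).
Implicit Types (e p : eb) (acc s : seq eb).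

Definition noconf p e : bool := (p.1 != e.1) && [disjoint p.2 & e.2].

Lemma noconf_irr e : noconf e e = false.
Proof. by rewrite /noconf eqxx. Qed.

Lemma step_sub acc e : {subset acc <= gstep acc e}.
Proof.
move=> x; rewrite /greedy_step; case: ifP => // _.
by rewrite mem_rcons inE orbC => ->.
Qed.

Lemma foldl_prefix acc s : {subset acc <= foldl gstep acc s}.
Proof. by elim: s acc => [|x s IH] acc y hy //=; apply/IH/step_sub. Qed.

Lemma foldl_sub acc s : {subset foldl gstep acc s <= acc ++ s}.
Proof.
elim: s acc => [|x s IH] acc y /=; first by rewrite cats0.
move=> /IH; rewrite !mem_cat inE /greedy_step; case: ifP => _; last first.
  by case/orP=> ->; rewrite ?orbT.
rewrite mem_rcons inE; case/orP => [/orP[->|->]|->]; by rewrite ?orbT.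
Qed.

Lemma foldl_pairwise acc s : pairwise noconf acc ->
  pairwise noconf (foldl gstep acc s).
Proof.
elim: s acc => //= x s IH acc h; apply: IH; rewrite /greedy_step.
by case: ifP => // hall; rewrite pairwise_rcons hall.
Qed.

Lemma greedy_charging (r : rel eb) acc s e :
  transitive r -> reflexive r -> sorted r s ->
  (forall q x, q \in acc -> x \in s -> r q x) -> e \in s ->
  exists2 p, p \in foldl gstep acc s & ~~ noconf p e && r p e.
Proof.
move=> rt rr; elim: s acc => //= x s IH acc hs hacc.
rewrite inE => /orP[/eqP ->|hes].
  rewrite /greedy_step; case: ifP => hall.
    exists x; last by rewrite noconf_irr rr.
    by apply: foldl_prefix; rewrite mem_rcons mem_head.
  move/negbT: hall; rewrite -has_predC => /hasP[q hq /= hqx].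
  exists q; first exact: foldl_prefix.
  by rewrite hqx /= hacc // mem_head.
apply: IH => //; first exact: path_sorted hs.
move=> q y hq hy; move: hq; rewrite /greedy_step; case: ifP => _ hq.
  move: hq; rewrite mem_rcons inE => /orP[/eqP ->|hq].
    by move: (order_path_min rt hs) => /allP; apply.
  by apply: hacc; rewrite // inE hy orbT.
by apply: hacc; rewrite // inE hy orbT.
Qed.

Lemma accepted_split s e : e \in foldl gstep [::] s ->
  exists s1 s2, s = s1 ++ e :: s2 /\ all (noconf^~ e) (foldl gstep [::] s1).
Proof.
have gen acc : e \in foldl gstep acc s -> e \in acc \/
    exists s1 s2, s = s1 ++ e :: s2 /\ all (noconf^~ e) (foldl gstep acc s1).
  elim: s acc => [|x s IH] acc /=; first by left.
  move=> /IH [h|[s1 [s2 [-> h]]]]; last by right; exists (x :: s1), s2.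
  move: h; rewrite /greedy_step; case: ifP => hall h; last by left.
  move: h; rewrite mem_rcons inE => /orP[/eqP ->|h]; last by left.
  by right; exists [::], s.
by move=> /gen [].
Qed.

Lemma accepted_intro s1 s2 e : all (noconf^~ e) (foldl gstep [::] s1) ->
  e \in foldl gstep [::] (s1 ++ e :: s2).
Proof.
move=> h; rewrite foldl_cat /=; apply: foldl_prefix.
by rewrite /greedy_step h mem_rcons mem_head.
Qed.

Lemma foldl_skip (i : 'I_n) acc s :
  all (fun p : eb => p.1 != i) (foldl gstep acc s) ->
  foldl gstep acc s = foldl gstep acc [seq e <- s | e.1 != i].
Proof.
elim: s acc => //= x s IH acc h.
case: ifP => hx /=; first by rewrite IH.
move: h; rewrite /greedy_step; case: ifP => _ h; last by rewrite IH.
have : x \in foldl gstep (rcons acc x) s.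
  by apply: foldl_prefix; rewrite mem_rcons mem_head.
by move: h => /allP h /h; rewrite hx.
Qed.

Lemma bidder_filter (A : seq eb) p : pairwise noconf A -> p \in A ->
  [seq q <- A | q.1 == p.1] = [:: p].
Proof.
elim: A => //= x A IH /andP[hx hpw]; rewrite inE.
case: (eqVneq p x) => [-> _|hne /= hp].
  rewrite eqxx filter_pred0_in //; apply/allP => y /(allP hx).
  by rewrite /noconf => /andP[hh _] /=; rewrite eq_sym.
by have /andP[hxp _] := allP hx p hp; rewrite (negPf hxp); exact: IH.
Qed.

Lemma alloc_of_mem (A : seq eb) p : pairwise noconf A -> p \in A -> alloc_of A p.1 = p.2.
Proof. by move=> hpw hp; rewrite /alloc_of -big_filter (bidder_filter hpw hp) big_seq1. Qed.

Lemma alloc_of_none (A : seq eb) i :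
  ~~ has (fun q : eb => q.1 == i) A -> alloc_of A i = set0.
Proof. by move=> h; rewrite /alloc_of big_hasC. Qed.

End GreedyRun.

Section SmallGreedy.
Local Open Scope ring_scope.
Variables (R : rcfType) (U : finType) (n : nat).
Implicit Types (b c : profile R U n).
Local Notation eb := (ebid U n).
Local Notation gstep := (@greedy_step U n).

Definition kept c (e : eb) : bool := (0 < bidval c e) && small e.
Definition run_bids c := [seq e <- sorted_ebids c | kept c e].
Definition accepted c := foldl gstep [::] (run_bids c).

Lemma greedyE c : M_greedy_small c = alloc_of (accepted c).
Proof. by []. Qed.

Lemma run_bids_sorted c : sorted (ebid_le c) (run_bids c).
Proof. exact/(sorted_filter (@ebid_le_trans _ _ _ c))/sorted_ebids_sorted. Qed.

Lemma run_bids_uniq c : uniq (run_bids c).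
Proof. by rewrite filter_uniq // sort_uniq uniq_ebids. Qed.

Lemma mem_run_bids c e : (e \in run_bids c) = (e \in ebids c) && kept c e.
Proof. by rewrite mem_filter mem_sort andbC. Qed.

Lemma accepted_pairwise c : pairwise (@noconf U n) (accepted c).
Proof. exact: foldl_pairwise. Qed.

Lemma accepted_sub c p : p \in accepted c ->
  [/\ p.2 \in bcoll (c p.1), 0 < bidval c p & small p].
Proof.
case: p => j X /foldl_sub; rewrite /= mem_run_bids mem_ebids.
by case/andP=> hX /andP[hpos hsm].
Qed.

Lemma run_bids_prefix c s1 e s2 : run_bids c = s1 ++ e :: s2 ->
  s1 = [seq x <- run_bids c | ~~ ebid_le c e x].
Proof.
move=> hc; rewrite hc; apply: sorted_prefix; rewrite -?hc ?run_bids_uniq ?run_bids_sorted //.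
- exact: ebid_le_trans.
- exact: ebid_le_refl.
- exact: ebid_le_anti.
Qed.

Lemma greedy_alloc_cases c i : M_greedy_small c i = set0 \/
  exists2 S, (i, S) \in accepted c & M_greedy_small c i = S.
Proof.
rewrite greedyE; case: (boolP (has (fun q : eb => q.1 == i) (accepted c))).
  case/hasP=> -[j S] hp /= /eqP hj; subst j; right; exists S => //.
  exact: (alloc_of_mem (accepted_pairwise c) hp).
by left; apply: alloc_of_none.
Qed.

Lemma greedy_alloc_value c p : p \in accepted c ->
  bidval c p <= ext_val (c p.1) (M_greedy_small c p.1).
Proof.
move=> hp; have [hX _ _] := accepted_sub hp.
by rewrite greedyE (alloc_of_mem (accepted_pairwise c) hp); apply: ext_val_ge.
Qed.

Lemma run_bids_others c b (i : 'I_n) : (forall j, j != i -> c j = b j) ->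
  [seq e <- run_bids c | e.1 != i] =
  sort (ebid_le b) [seq e <- [seq e <- ebids b | e.1 != i] | kept b e].
Proof.
move=> hcb.
have hK : {in [seq e <- ebids b | e.1 != i], kept c =1 kept b}.
  by move=> x; rewrite mem_filter => /andP[hx _]; rewrite /kept /bidval hcb.
rewrite /run_bids /sorted_ebids -filter_predI.
rewrite filter_sort; [|exact: ebid_le_total|exact: ebid_le_trans].
rewrite filter_predI filter_comm (ebids_others hcb) (eq_in_filter hK).
set L := filter _ _.
have hL : all (fun e : eb => e.1 != i) L.
  by apply/allP => x; rewrite /L !mem_filter => /and3P[].
apply: (sorted_eq (@ebid_le_trans _ _ _ b) (@ebid_le_anti _ _ _ b)).
- rewrite -(@eq_in_sorted _ (fun e : eb => e.1 != i) (ebid_le c)).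
  + exact/sort_sorted/ebid_le_total.
  + by move=> x y hx hy; rewrite /ebid_le !hcb.
  + by apply/allP => x; rewrite mem_sort => /(allP hL).
- exact/sort_sorted/ebid_le_total.
- by rewrite perm_sort perm_sym perm_sort.
Qed.

End SmallGreedy.

Section Monotonicity.
Local Open Scope ring_scope.
Variables (R : rcfType) (U : finType) (n : nat).
Variables (i : 'I_n) (b : profile R U n) (ti bi : btype R U).
Local Notation eb := (ebid U n).
Local Notation gstep := (@greedy_step U n).
Local Notation bL := (upd b i bi).
Local Notation bT := (upd b i ti).

Lemma truth_precedes S S' (x : eb) : x.1 != i -> bval bi S <= bval ti S' ->
  ebid_le bL (i, S) x -> ebid_le bT (i, S') x.
Proof.
move=> hxi hzv; rewrite /ebid_le /= !upd_same !upd_other //.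
have -> : (i == x.1) = false by rewrite eq_sym (negPf hxi).
rewrite /= !orbF => /orP[h|/andP[/eqP h h2]]; first by rewrite (lt_le_trans h hzv).
rewrite -h h2 andbT; move: hzv; rewrite le_eqVlt => /orP[/eqP ->|->] //.
by rewrite eqxx orbT.
Qed.

Lemma max_wins_at_least S S' rest :
  sorted_ebids bL = (i, S) :: rest -> S' \in bcoll ti ->
  bval bi S <= bval ti S' -> bval ti S' <= ext_val ti (M_max bT i).
Proof.
move=> hL hS' hzv; rewrite /M_max.
have := sorted_ebids_sorted bT; have : (i, S') \in sorted_ebids bT.
  by rewrite mem_sort mem_ebids upd_same.
case hT : (sorted_ebids bT) => [//|[j X] st] he' sortT.
have hmin : ebid_le bT (j, X) (i, S').
  exact: (sorted_head_min (@ebid_le_trans _ _ _ bT) (@ebid_le_refl _ _ _ bT) sortT).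
have hX : X \in bcoll (bT j).
  by rewrite -mem_ebids -(mem_sort (ebid_le bT)) -/(sorted_ebids _) hT mem_head.
rewrite /=; case: (eqVneq i j) => [eij|hij].
  subst j; move: hmin hX => /ebid_le_val; rewrite /bidval /= upd_same => hle hX.
  exact: le_trans hle (ext_val_ge hX (subxx X)).
have hji : j != i by rewrite eq_sym.
have hLX : ebid_le bL (i, S) (j, X).
  have := sorted_ebids_sorted bL; rewrite hL => sortL.
  apply: (sorted_head_min (@ebid_le_trans _ _ _ bL) (@ebid_le_refl _ _ _ bL) sortL).
  by rewrite -hL mem_sort mem_ebids upd_other // -(upd_other b ti hji).
have [eji _] : (j, X) = (i, S').
  apply: (@ebid_le_anti _ _ _ bT).
  by rewrite hmin (truth_precedes (x := (j, X)) hji hzv hLX).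
by rewrite eji eqxx in hij.
Qed.

Lemma others_accepted_before S S' l1 l2 s1 s2 :
  bval bi S <= bval ti S' ->
  run_bids bL = l1 ++ (i, S) :: l2 -> run_bids bT = s1 ++ (i, S') :: s2 ->
  all (@noconf U n ^~ (i, S)) (foldl gstep [::] l1) ->
  all (fun p : eb => p.1 != i) (foldl gstep [::] s1) ->
  {subset foldl gstep [::] s1 <= foldl gstep [::] l1}.
Proof.
move=> hzv hL hT hall allT q.
have allL : all (fun p : eb => p.1 != i) (foldl gstep [::] l1).
  by apply/allP => y hy; have /andP[] := allP hall y hy.
set o := [seq e <- run_bids bT | e.1 != i].
have hoL : [seq e <- run_bids bL | e.1 != i] = o.
  by rewrite /o !(run_bids_others (b := b)) // => j hj; exact: upd_other.
have himp : {in o, forall x, ~~ ebid_le bT (i, S') x -> ~~ ebid_le bL (i, S) x}.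
  move=> x; rewrite mem_filter => /andP[hxi _]; apply: contra.
  exact: truth_precedes.
have [rest hrest] := filter_sorted_prefix (@ebid_le_trans _ _ _ bT)
   (sorted_filter (@ebid_le_trans _ _ _ bT) _ (run_bids_sorted bT)) himp.
rewrite (foldl_skip allT) (foldl_skip allL) (run_bids_prefix hT) (run_bids_prefix hL).
rewrite (filter_comm _ _ (run_bids bT)) (filter_comm _ _ (run_bids bL)) -/o hoL hrest.
by rewrite foldl_cat; apply: foldl_prefix.
Qed.

Lemma greedy_wins_at_least S S' :
  (i, S) \in accepted bL -> S' \in bcoll ti -> S' \subset S ->
  bval bi S <= bval ti S' -> bval ti S' <= ext_val ti (M_greedy_small bT i).
Proof.
move=> hacc hS' hS'S hzv.
have [_ hpos hsmall] := accepted_sub hacc.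
rewrite /bidval /= upd_same in hpos.
have he' : (i, S') \in run_bids bT.
  rewrite mem_run_bids mem_ebids upd_same hS' /kept /bidval /= upd_same.
  rewrite (lt_le_trans hpos hzv) /small /=; apply: leq_trans hsmall.
  by apply: leq_mul; apply: subset_leq_card.
have [s1 [s2 hT]] : exists s1 s2, run_bids bT = s1 ++ (i, S') :: s2.
  by case/splitPr: he' => s1 s2; exists s1, s2.
have [l1 [l2 [hL hall]]] := accepted_split hacc.
suff [X hX hle] : exists2 X, (i, X) \in accepted bT & bval ti S' <= bval ti X.
  by apply: le_trans hle _; have := greedy_alloc_value hX; rewrite /bidval /= upd_same.
case: (boolP (has (fun q : eb => q.1 == i) (foldl gstep [::] s1))) => hA.
  case/hasP: hA => -[j X] hq /= /eqP hj; subst j; exists X.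
    by rewrite /accepted hT foldl_cat; apply: foldl_prefix.
  have hle : ebid_le bT (i, X) (i, S').
    apply: (sorted_before (@ebid_le_trans _ _ _ bT) (s2 := s2)) (foldl_sub hq).
    by rewrite -hT run_bids_sorted.
  by have := ebid_le_val hle; rewrite /bidval /= upd_same.
exists S'; last exact: lexx.
have allT : all (fun p : eb => p.1 != i) (foldl gstep [::] s1).
  by apply/allP => y hy; exact: (hasPn hA y hy).
rewrite /accepted hT; apply: accepted_intro; apply/allP => q hq.
have := allP hall q (others_accepted_before hzv hL hT hall allT hq).
rewrite /noconf /= (allP allT q hq) => hd /=.
exact: disjointWr hS'S hd.
Qed.

End Monotonicity.

Section Truthfulness.
Local Open Scope ring_scope.
Variables (R : rcfType) (U : finType) (n : nat).

Lemma truthful_of_dominance k (M : mechanism R U n) :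
  (forall i b ti bi, M (upd b i bi) i = set0 \/
     M (upd b i bi) i \in bcoll bi /\
     forall S', S' \in bcoll ti -> S' \subset M (upd b i bi) i ->
       bval bi (M (upd b i bi) i) <= bval ti S' ->
       bval ti S' <= ext_val ti (M (upd b i ti) i)) ->
  truthful_verif k M.
Proof.
move=> hdom i b ti bi _ _ _ hv.
case: (hdom i b ti bi) => [->|[hS hwin]]; first exact/ext_val_mono/sub0set.
case: (verified_witness hS hv) => [->|[S' /andP[hS' hS'S] [-> hzv]]].
  exact: ext_val_ge0.
exact: hwin.
Qed.

Lemma M_max_cases (c : profile R U n) i : M_max c i = set0 \/
  exists rest, sorted_ebids c = (i, M_max c i) :: rest.
Proof.
rewrite /M_max; case: (sorted_ebids c) => [|[j S] rest] /=; first by left.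
by case: (eqVneq i j) => [<-|_]; [right; exists rest | left].
Qed.

Lemma truthful_max k : truthful_verif k (@M_max R U n).
Proof.
apply: truthful_of_dominance => i b ti bi.
case: (M_max_cases (upd b i bi) i) => [->|[rest hL]]; first by left.
have : (i, M_max (upd b i bi) i) \in sorted_ebids (upd b i bi) by rewrite hL mem_head.
rewrite mem_sort mem_ebids upd_same => hS; right; split => // S' hS' _.
exact: max_wins_at_least hL hS'.
Qed.

Lemma truthful_greedy k : truthful_verif k (@M_greedy_small R U n).
Proof.
apply: truthful_of_dominance => i b ti bi.
case: (greedy_alloc_cases (upd b i bi) i) => [->|[S hS ->]]; first by left.
right; split; first by have [] := accepted_sub hS; rewrite /= upd_same.
by move=> S' hS' hS'S hzv; apply: (greedy_wins_at_least hS).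
Qed.

End Truthfulness.

Section Counting.
Variables (U : finType) (n : nat).

Lemma sum_bool_card (P : pred 'I_n) : \sum_(i < n) (P i : nat) = #|P|.
Proof.
rewrite -sum1_card [RHS]big_mkcond /=; apply: eq_bigr => i _.
by rewrite unfold_in; case: (P i).
Qed.

Lemma card_sub_sum (X A : {set U}) : A \subset X -> #|A| = \sum_(x in X) (x \in A : nat).
Proof.
move=> hAX; rewrite -sum1_card.
rewrite [RHS](bigID (fun x => x \in A)) /= [X in _ = _ + X]big1 ?addn0; last first.
  by move=> x /andP[_ /negPf ->].
apply: eq_big => [x|x ->//].
by apply/idP/andP => [hx|[]//]; split => //; exact: (subsetP hAX).
Qed.

Lemma disjoint_family_sum (F : 'I_n -> {set U}) (X : {set U}) :
  (forall i j, i != j -> [disjoint F i & F j]) -> (forall i, F i \subset X) ->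
  (\sum_(i < n) #|F i| <= #|X|)%N.
Proof.
move=> hdis hsub.
rewrite (eq_bigr (fun i => \sum_(x in X) (x \in F i : nat))); last first.
  by move=> i _; apply: card_sub_sum.
rewrite exchange_big /= -[X in (_ <= X)%N]sum1_card; apply: leq_sum => x _.
rewrite (sum_bool_card (fun i => x \in F i)).
apply/card_le1P => i hi j /=; rewrite inE.
apply/idP/eqP => [hj|->//]; apply/eqP; apply: contraT => hne.
have hi' : x \in F i := hi.
by rewrite (disjointFr (hdis _ _ hne) hj) in hi'.
Qed.

Lemma count_meet (F : 'I_n -> {set U}) (X : {set U}) :
  (forall i j, i != j -> [disjoint F i & F j]) ->
  (#|[pred i | ~~ [disjoint X & F i]]| <= #|X|)%N.
Proof.
move=> hdis; apply: leq_trans (disjoint_family_sum (F := fun i => X :&: F i) _ _); last first.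
- by move=> i; apply: subsetIl.
- move=> i j hij; apply: disjointWl (subsetIr X (F i)) _.
  by apply: disjointWr (subsetIr X (F j)) _; apply: hdis.
rewrite -(sum_bool_card [pred i | ~~ [disjoint X & F i]]); apply: leq_sum => i _ /=.
case: (boolP [disjoint X & F i]) => //= h.
by rewrite card_gt0; apply: contra h => /eqP h0; rewrite -setI_eq0 h0.
Qed.

End Counting.

Section SqrtBounds.
Local Open Scope ring_scope.
Variables (R : rcfType) (m : nat).
Local Notation sqm := (Num.sqrt (m%:R : R)).

Lemma sqrt_nat_sqr : sqm * sqm = m%:R.
Proof. by rewrite -expr2 sqr_sqrtr // ler0n. Qed.

Lemma le_sqrt_nat (c : nat) : (c * c <= m)%N -> (c%:R : R) <= sqm.
Proof.
move=> h; rewrite -[X in X <= _](@ger0_norm _ (c%:R : R)) ?ler0n //.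
by rewrite -sqrtr_sqr ler_sqrt ?ler0n // expr2 -natrM ler_nat.
Qed.

Lemma lt_sqrt_nat (c : nat) : (m < c * c)%N -> sqm < (c%:R : R).
Proof.
move=> h; rewrite -[X in _ < X](@ger0_norm _ (c%:R : R)) ?ler0n //.
rewrite -sqrtr_sqr ltr_sqrt ?expr2 -?natrM ?ltr_nat //.
by rewrite ltr0n; apply: leq_ltn_trans h.
Qed.

End SqrtBounds.

Section Approximation.
Local Open Scope ring_scope.
Variables (R : rcfType) (U : finType) (n k : nat) (t : profile R U n).
Hypothesis t_valid : forall i, valid_type k (t i).
Local Notation eb := (ebid U n).
Local Notation sqm := (Num.sqrt (#|U|%:R : R)).

Definition top_value : R := if sorted_ebids t is h :: _ then bidval t h else 0.
Definition greedy_value : R := \sum_(p <- accepted t) bidval t p.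

Lemma bidval_ge0 e : e \in ebids t -> 0 <= bidval t e.
Proof. by case: e => i X; rewrite mem_ebids => hX; have [_ [_]] := t_valid i; apply. Qed.

Lemma accepted_val_ge0 p : p \in accepted t -> 0 <= bidval t p.
Proof.
by case: p => j X hp; have [hX _ _] := accepted_sub hp; apply: bidval_ge0; rewrite mem_ebids.
Qed.

Lemma greedy_value_ge0 : 0 <= greedy_value.
Proof. by rewrite /greedy_value big_seq; apply: sumr_ge0 => p; apply: accepted_val_ge0. Qed.

Lemma top_value_ge e : e \in ebids t -> bidval t e <= top_value.
Proof.
rewrite -(mem_sort (ebid_le t)) -/(sorted_ebids t) /top_value; have := sorted_ebids_sorted t.
case: (sorted_ebids t) => [//|h s] hs he; apply: ebid_le_val.
exact: (sorted_head_min (@ebid_le_trans _ _ _ t) (@ebid_le_refl _ _ _ t) hs).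
Qed.

Lemma top_value_ge0 : 0 <= top_value.
Proof.
rewrite /top_value; have : forall e, e \in sorted_ebids t -> e \in ebids t.
  by move=> e; rewrite mem_sort.
by case: (sorted_ebids t) => [//|h s] hm; apply/bidval_ge0/hm/mem_head.
Qed.

Lemma top_value_le_welfare : top_value <= welfare t (M_max t).
Proof.
rewrite /top_value /welfare /M_max.
have : forall e, e \in sorted_ebids t -> e \in ebids t by move=> e; rewrite mem_sort.
case: (sorted_ebids t) => [|[j X] s] hm.
  by apply: sumr_ge0 => i _; exact: ext_val_ge0.
rewrite (bigD1 j) //= eqxx.
have hX : X \in bcoll (t j) by rewrite -mem_ebids; apply/hm/mem_head.
apply: le_trans (ext_val_ge hX (subxx X)) _.
by rewrite lerDl; apply: sumr_ge0 => i _; exact: ext_val_ge0.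
Qed.

Lemma greedy_value_le_welfare : greedy_value <= welfare t (M_greedy_small t).
Proof.
have pw := accepted_pairwise t.
have -> : greedy_value = \sum_(i < n) \sum_(p <- accepted t | p.1 == i) bidval t p.
  rewrite /greedy_value (exchange_big_dep xpredT) //=; apply: eq_bigr => p _.
  by rewrite (eq_bigl (fun i => i == p.1)) ?big_pred1_eq // => i; rewrite eq_sym.
apply: ler_sum => i _.
case: (boolP (has (fun q : eb => q.1 == i) (accepted t))) => hh.
  case/hasP: hh => -[j X] hp /= /eqP hj; subst j.
  by rewrite -big_filter (bidder_filter pw hp) big_seq1; apply: greedy_alloc_value.
by rewrite big_hasC //; exact: ext_val_ge0.
Qed.

Lemma accepted_le_sum (P : pred eb) p : p \in accepted t -> P p ->
  bidval t p <= \sum_(q <- accepted t | P q) bidval t q.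
Proof.
move=> hp hP; rewrite (big_rem _ hp) hP lerDl big_seq_cond.
by apply: sumr_ge0 => q /andP[/mem_rem hq _]; exact: accepted_val_ge0.
Qed.

Lemma sum_accepted_ge0 (P : pred eb) : 0 <= \sum_(p <- accepted t | P p) bidval t p.
Proof. by rewrite big_seq_cond; apply: sumr_ge0 => p /andP[hp _]; apply: accepted_val_ge0. Qed.

(* A demanded set of bidder i, inside a i, realising i's value for a i
   (set0 when that value is 0). *)
Definition witness (a : allocation U n) i : {set U} :=
  odflt set0 [pick S | (S \in bcoll (t i)) && (S \subset a i) &&
                        (ext_val (t i) (a i) == bval (t i) S)].

Lemma witness_sub a i : witness a i \subset a i.
Proof. by rewrite /witness; case: pickP => [S /andP[/andP[_ h] _]|_] //=; exact: sub0set. Qed.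

Lemma witness_spec a i : ext_val (t i) (a i) = 0 \/
  (witness a i \in bcoll (t i) /\ ext_val (t i) (a i) = bval (t i) (witness a i)).
Proof.
rewrite /witness; case: pickP => [S /andP[/andP[h1 _] /eqP h3]|hn] /=; first by right.
case: (ext_val_attained (t i) (a i)) => [->|[S /andP[h1 h2] h3]]; first by left.
by move: (hn S); rewrite h1 h2 h3 eqxx.
Qed.

Lemma witness_disjoint a : feasible a ->
  forall i j, i != j -> [disjoint witness a i & witness a j].
Proof.
move=> /forallP ha i j hij; have /forallP /(_ j) /implyP /(_ hij) hd := ha i.
exact: disjointWl (witness_sub a i) (disjointWr (witness_sub a j) hd).
Qed.

Lemma bidder_bound a i : ext_val (t i) (a i) <=
  (if ~~ small (i, witness a i) then top_value else 0) +
  \sum_(p <- accepted t | ~~ noconf p (i, witness a i)) bidval t p.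
Proof.
have rhs0 : 0 <= (if ~~ small (i, witness a i) then top_value else 0) +
    \sum_(p <- accepted t | ~~ noconf p (i, witness a i)) bidval t p.
  by apply: addr_ge0; [case: ifP => // _; exact: top_value_ge0 | exact: sum_accepted_ge0].
case: (witness_spec a i) => [->//|[hS ->]].
have he : (i, witness a i) \in ebids t by rewrite mem_ebids.
case: (boolP (small (i, witness a i))) => hs /=; last first.
  by apply: le_trans (top_value_ge he) _; rewrite lerDl; exact: sum_accepted_ge0.
rewrite add0r; case: (lerP (bval (t i) (witness a i)) 0) => hpos.
  exact: le_trans hpos (sum_accepted_ge0 _).
have hrun : (i, witness a i) \in run_bids t by rewrite mem_run_bids he /kept hpos hs.
have nil_first q x : q \in [::] -> x \in run_bids t -> ebid_le t q x by [].
have [p hp /andP[hc hle]] := greedy_charging (@ebid_le_trans _ _ _ t)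
   (@ebid_le_refl _ _ _ t) (run_bids_sorted t) nil_first hrun.
exact: le_trans (ebid_le_val hle) (accepted_le_sum hp hc).
Qed.

Lemma sumr_const_pred (P : pred 'I_n) (x : R) : \sum_(i < n | P i) x = x *+ #|P|.
Proof. by rewrite -sumr_const. Qed.

(* An accepted (small) bid conflicts with at most sqrt m + 1 witnesses:
   one of its own bidder, and at most |X| <= sqrt m meeting its set X. *)
Lemma conflict_count a p : feasible a -> p \in accepted t ->
  (#|[pred i | ~~ noconf p (i, witness a i)]|%:R : R) <= sqm + 1.
Proof.
move=> ha hp; have [_ _ hsm] := accepted_sub hp.
set Meet := [pred i | ~~ [disjoint p.2 & witness a i]].
have h1 : (#|[pred i | ~~ noconf p (i, witness a i)]| <= 1 + #|p.2|)%N.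
  apply: leq_trans (_ : #|[predU pred1 p.1 & Meet]| <= _)%N.
    apply: subset_leq_card; apply/subsetP => i; rewrite !inE /noconf /= negb_and negbK.
    by rewrite eq_sym.
  have e := cardUI (pred1 p.1) Meet; rewrite card1 in e.
  apply: leq_trans (leq_addr #|[predI pred1 p.1 & Meet]| _) _.
  by rewrite e leq_add2l; apply/count_meet/witness_disjoint.
apply: le_trans (_ : ((1 + #|p.2|)%N%:R : R) <= _); first by rewrite ler_nat.
by rewrite natrD addrC lerD2r; apply: le_sqrt_nat.
Qed.

Lemma le_sqrt_add1 (c s : R) : 0 <= s -> 0 <= c -> c * s <= s * s -> c <= s * s ->
  c <= s + 1.
Proof. by move=> *; nra. Qed.

(* At most sqrt m + 1 witnesses are large, as they are disjoint in U. *)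
Lemma large_count a : feasible a ->
  (#|[pred i | ~~ small (i, witness a i)]|%:R : R) <= sqm + 1.
Proof.
move=> ha; set L := [pred i | ~~ small (i, witness a i)].
have hsum : (\sum_(i < n | L i) #|witness a i| <= #|U|)%N.
  apply: leq_trans (_ : \sum_(i < n) #|witness a i| <= _)%N.
    by rewrite [X in (_ <= X)%N](bigID L) /=; apply: leq_addr.
  rewrite -cardsT; apply: disjoint_family_sum => [|i]; [exact: witness_disjoint | exact: subsetT].
have hc : (#|L| <= \sum_(i < n | L i) #|witness a i|)%N.
  rewrite -sum1_card; apply: leq_sum => i; rewrite /L inE /small /= -ltnNge.
  by case: #|witness a i|.
have hcs : (#|L|%:R : R) * sqm <= #|U|%:R.
  rewrite mulr_natl -sumr_const_pred.
  apply: le_trans (_ : \sum_(i < n | L i) (#|witness a i|%:R : R) <= _).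
    apply: ler_sum => i hi; apply/ltW/lt_sqrt_nat.
    by move: hi; rewrite /L /small /= -ltnNge.
  by rewrite -natr_sum ler_nat.
apply: le_sqrt_add1; rewrite ?sqrtr_ge0 ?ler0n ?sqrt_nat_sqr //.
by rewrite ler_nat (leq_trans hc hsum).
Qed.

(* Summing bidder_bound: large witnesses are charged to v_max, small ones to
   the accepted bids they conflict with. *)
Lemma welfare_bound (a : allocation U n) : feasible a ->
  welfare t a <= (sqm + 1) * (top_value + greedy_value).
Proof.
move=> ha; rewrite /welfare.
apply: le_trans; first by apply: ler_sum => i _; exact: bidder_bound.
rewrite big_split /= -big_mkcond sumr_const_pred (exchange_big_dep xpredT) //=.
have -> : (sqm + 1) * (top_value + greedy_value) =
    top_value * (sqm + 1) + greedy_value * (sqm + 1) by ring.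
apply: lerD.
  rewrite -[top_value *+ _]mulr_natr.
  by apply: ler_wpM2l; [exact: top_value_ge0 | exact: large_count].
rewrite /greedy_value mulr_suml big_seq_cond [X in _ <= X]big_seq_cond.
apply: ler_sum => p /andP[hp _].
rewrite (eq_bigl [pred i | ~~ noconf p (i, witness a i)]) // sumr_const_pred.
rewrite -[bidval t p *+ _]mulr_natr.
by apply: ler_wpM2l; [exact: accepted_val_ge0 | exact: conflict_count].
Qed.

Lemma opt_bound : OPT t <= (sqm + 1) * (top_value + greedy_value).
Proof.
apply: bigmax_le => [|a ha]; last exact: welfare_bound.
apply: mulr_ge0; first by apply: addr_ge0 => //; exact: sqrtr_ge0.
exact: addr_ge0 top_value_ge0 greedy_value_ge0.
Qed.

End Approximation.

Section RandPolyMechanism.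
Local Open Scope ring_scope.
Variables (R : rcfType) (U : finType) (n : nat).

Lemma RandPoly_universally_truthful k : universally_truthful k (RandPoly R U n).
Proof.
split; last by move=> pM /= [<-|[<-|[]]]; [exact: truthful_max | exact: truthful_greedy].
split; first by move=> p; rewrite !inE => /orP[/eqP ->|/eqP ->]; rewrite invr_ge0 ler0n.
by rewrite /= !big_cons big_nil; field.
Qed.

Lemma RandPoly_expected_welfare (t : profile R U n) : expected_welfare (RandPoly R U n) t =
  2^-1 * welfare t (M_max t) + 2^-1 * welfare t (M_greedy_small t).
Proof. by rewrite /expected_welfare !big_cons big_nil addr0. Qed.

End RandPolyMechanism.

Local Open Scope ring_scope.

Theorem theorem10 (R : rcfType) (U : finType) (n k : nat) :
  universally_truthful k (RandPoly R U n) /\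
  (forall t : profile R U n, (forall i, valid_type k (t i)) ->
     OPT t / (2 * (Num.sqrt (#|U|%:R) + 1)) <= expected_welfare (RandPoly R U n) t).
Proof.
split; first exact: RandPoly_universally_truthful.
move=> t hv; rewrite RandPoly_expected_welfare.
have hopt := opt_bound hv.
have hmax := top_value_le_welfare t.
have hgreedy := greedy_value_le_welfare t.
have hsq : 0 <= Num.sqrt (#|U|%:R : R) := sqrtr_ge0 _.
have := top_value_ge0 hv; have := greedy_value_ge0 hv.
rewrite ler_pdivrMr; last by nra.
by move=> *; apply: le_trans hopt _; nra.
Qed.
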